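(* There are infinitely many positive integers $n$ such that $$H_{4n}(K_{2,3})\ge\left(\frac{1+\sqrt5}{2}\right)^{n-o(n)}.$$
   Context: For a graph $G$, $H_m(G)$ denotes the maximum number of Hamilton paths in the complete graph $K_m$ such that the union of any two of them contains $G$ as a subgraph. $K_{2,3}$ is the complete bipartite graph with parts of sizes 2 and 3. *)

From mathcomp Require Import all_boot fingroup perm.
Set Implicit Arguments. Unset Strict Implicit. Unset Printing Implicit Defensive.

(* Vertices of K_m are 'I_m; an (undirected) edge is a 2-element set {u,v}.
   A Hamilton path of K_m is identified with its edge set: the edges
   {s i, s (i+1)} for an ordering s of all m vertices. *)
Definition ham_path (m : nat) (P : {set {set 'I_m}}) : bool :=
  [exists s : {perm 'I_m},
    P == [set E : {set 'I_m} | [exists i : 'I_m, exists j : 'I_m,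
         (val j == (val i).+1) && (E == [set s i; s j])]]].

Definition contains_graph (V : finType) (e : rel V) (m : nat)
    (E : {set {set 'I_m}}) : bool :=
  [exists f : {ffun V -> 'I_m},
    injectiveb f && [forall u, forall v, e u v ==> ([set f u; f v] \in E)]].

Definition good_family (V : finType) (e : rel V) (m : nat)
    (F : {set {set {set 'I_m}}}) : bool :=
  [forall P in F, ham_path P] &&
  [forall P in F, forall Q in F, (P != Q) ==> contains_graph e (P :|: Q)].

Definition Hnum (V : finType) (e : rel V) (m : nat) : nat :=
  \max_(F : {set {set {set 'I_m}}} | good_family e F) #|F|.

Definition K23V : finType := ('I_2 + 'I_3)%type.
Definition K23e : rel K23V := fun u v =>
  match u, v with
  | inl _, inr _ | inr _, inl _ => true
  | _, _ => false
  end.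

(* Lower bound H_{4n}(K_{2,3}) >= 2^(n-1), hence >= phi^(n - o(n)).

   Take the vertices 0, ..., 4n-1 of K_{4n} and cut 0..4(n-1) into n-1
   overlapping blocks {4x, ..., 4x+4}.  For every bit vector
   b : {0..n-2} -> bool we visit the vertices in increasing order, except
   that inside each block x with b x = true the two odd vertices are
   exchanged, i.e. the block is traversed 4x,4x+3,4x+2,4x+1,4x+4.  This gives
   2^(n-1) distinct Hamilton paths.  If b and b' differ at x, the union of
   the two traversals 0-1-2-3-4 and 0-3-2-1-4 of block x contains every edge
   between {4x+1, 4x+3} and {4x, 4x+2, 4x+4}: a copy of K_{2,3}. *)
From mathcomp Require Import all_boot fingroup perm zify.
Set Implicit Arguments. Unset Strict Implicit. Unset Printing Implicit Defensive.

Definition path_edges (m : nat) (s : {perm 'I_m}) : {set {set 'I_m}} :=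
  [set E : {set 'I_m} | [exists i : 'I_m, exists j : 'I_m,
     (val j == (val i).+1) && (E == [set s i; s j])]].

Lemma path_edges_ham m (s : {perm 'I_m}) : ham_path (path_edges s).
Proof. by apply/existsP; exists s. Qed.

Lemma path_edges_consecutive m (s : {perm 'I_m}) (i j : 'I_m) :
  val j = (val i).+1 -> [set s i; s j] \in path_edges s.
Proof.
by move=> ij; rewrite inE; apply/existsP; exists i; apply/existsP; exists j; rewrite ij !eqxx.
Qed.

Lemma path_edges_positions m (s : {perm 'I_m}) (i j : 'I_m) :
  [set s i; s j] \in path_edges s -> val j = (val i).+1 \/ val i = (val j).+1.
Proof.
rewrite inE => /existsP [i' /existsP [j' /andP [/eqP ij' /eqP E]]].
have pair_pos (w a c : 'I_m) :
    s w \in [set s a; s c] -> nat_of_ord w = a \/ nat_of_ord w = c.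
  by rewrite !inE !(inj_eq perm_inj) => /orP [] /eqP ->; [left | right].
have := pair_pos i i' j' ltac:(by rewrite -E set21).
have := pair_pos j i' j' ltac:(by rewrite -E set22).
have := pair_pos i' i j ltac:(by rewrite E set21).
have := pair_pos j' i j ltac:(by rewrite E set22).
move: ij'; rewrite /=; lia.
Qed.

Definition twist (t : bool) (r : nat) : nat := if t && odd r then 4 - r else r.

Definition blockswap (p : pred nat) (i : nat) : nat :=
  4 * (i %/ 4) + twist (p (i %/ 4)) (i %% 4).

Lemma blockswap_block p x r :
  r <= 4 -> blockswap p (4 * x + r) = 4 * x + twist (p x) r.
Proof.
rewrite leq_eqVlt => /orP [/eqP -> | lt_r]; rewrite /blockswap.
  have [-> ->] : (4 * x + 4) %/ 4 = x.+1 /\ (4 * x + 4) %% 4 = 0 by lia.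
  by rewrite /twist /= !andbF; lia.
by have [-> ->] : (4 * x + r) %/ 4 = x /\ (4 * x + r) %% 4 = r by lia.
Qed.

Lemma twist_lt t r : r < 4 -> twist t r < 4.
Proof. by rewrite /twist; case: t r => [] [|[|[|[|r]]]]. Qed.

Lemma twistK t r : r < 4 -> twist t (twist t r) = r.
Proof. by rewrite /twist; case: t r => [] [|[|[|[|r]]]]. Qed.

Lemma blockswapK p : involutive (blockswap p).
Proof.
move=> i; have lt_r : i %% 4 < 4 by exact: ltn_pmod.
rewrite (divn_eq i 4) mulnC.
move: (i %/ 4) (i %% 4) lt_r => x r lt_r.
rewrite blockswap_block 1?ltnW // blockswap_block; last exact/ltnW/twist_lt.
by rewrite twistK.
Qed.

(* A block swap never leaves 0..4n-1, since it preserves each block. *)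
Lemma blockswap_lt p n i : i < 4 * n -> blockswap p i < 4 * n.
Proof.
rewrite /blockswap; have := twist_lt (p (i %/ 4)) (ltn_pmod i (isT : 0 < 4)).
have := divn_eq i 4; set t := twist _ _; move: t (i %/ 4) (i %% 4) => t q r.
lia.
Qed.

Definition bits k (b : {ffun 'I_k -> bool}) : pred nat :=
  fun j => if insub j is Some x then b x else false.

Lemma bitsE k (b : {ffun 'I_k -> bool}) (x : 'I_k) : bits b x = b x.
Proof. by rewrite /bits valK. Qed.

Section TwistedPaths.

Variable k : nat.
Implicit Types (b : {ffun 'I_k -> bool}) (x : 'I_k).

Local Notation V := 'I_(4 * k.+1).

(* blockswap (bits b), restricted to the vertices of K_{4(k+1)}; being an
   involution it is a permutation. *)
Definition twist_vertex b (i : V) : V := insubd i (blockswap (bits b) i).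

Lemma val_twist_vertex b (i : V) : val (twist_vertex b i) = blockswap (bits b) i.
Proof. by rewrite val_insubd blockswap_lt. Qed.

Lemma twist_vertex_inj b : injective (twist_vertex b).
Proof.
move=> i j e; apply/val_inj/(can_inj (blockswapK (bits b))).
by rewrite -!val_twist_vertex e.
Qed.

Definition twist_perm b : {perm V} := perm (@twist_vertex_inj b).

Definition twisted_path b : {set {set V}} := path_edges (twist_perm b).

Lemma twist_perm_block b x r (i : V) :
  r <= 4 -> val i = 4 * x + r -> val (twist_perm b i) = 4 * x + twist (b x) r.
Proof. by move=> le_r i_eq; rewrite permE val_twist_vertex i_eq blockswap_block ?bitsE. Qed.

Lemma twisted_path_block_edge b x r (u v : V) :
  r < 4 -> val u = 4 * x + twist (b x) r -> val v = 4 * x + twist (b x) r.+1 ->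
  [set u; v] \in twisted_path b.
Proof.
move=> lt_r hu hv; have := ltn_ord x => lt_x.
have lt_i : 4 * x + r < 4 * k.+1 by lia.
have lt_j : 4 * x + r.+1 < 4 * k.+1 by lia.
have [-> ->] : u = twist_perm b (Ordinal lt_i) /\ v = twist_perm b (Ordinal lt_j).
  split; apply: val_inj.
    by rewrite (@twist_perm_block b x r) // ltnW.
  by rewrite (@twist_perm_block b x r.+1).
by apply: path_edges_consecutive => /=; lia.
Qed.

Lemma twist_pairs_complete (a : 'I_2) (c : 'I_3) :
  exists t r, r < 4 /\ [\/ (twist t r, twist t r.+1) = ((2 * a).+1, 2 * c)
                         | (twist t r, twist t r.+1) = (2 * c, (2 * a).+1)].
Proof.
case: a c => [[|[|a]] ?] [[|[|[|c]]] ?] //=.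
- by exists false, 0; split; [|right].
- by exists false, 1; split; [|left].
- by exists true, 3; split; [|left].
- by exists true, 0; split; [|right].
- by exists false, 2; split; [|right].
- by exists false, 3; split; [|left].
Qed.

Definition block_code x (v : K23V) : nat :=
  match v with inl a => 4 * x + (2 * a).+1 | inr c => 4 * x + 2 * c end.

Lemma block_code_lt x v : block_code x v < 4 * k.+1.
Proof. by have := ltn_ord x; case: v => [a|c] /=; [have := ltn_ord a | have := ltn_ord c]; lia. Qed.

Definition block_embedding x : {ffun K23V -> V} :=
  [ffun v => Ordinal (block_code_lt x v)].

Lemma block_embedding_inj x : injective (block_embedding x).
Proof.
move=> u v /(congr1 val); rewrite !ffunE /=.
case: u v => [[a ?]|[c ?]] [[a' ?]|[c' ?]] /= e; try lia.
  by congr inl; apply: val_inj => /=; lia.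
by congr inr; apply: val_inj => /=; lia.
Qed.

Lemma union_contains_K23 b1 b2 x : b1 x != b2 x ->
  contains_graph K23e (twisted_path b1 :|: twisted_path b2).
Proof.
move=> neq_x; apply/existsP; exists (block_embedding x).
apply/andP; split; first exact/injectiveP/block_embedding_inj.
suff edge a c : [set block_embedding x (inl a); block_embedding x (inr c)]
                \in twisted_path b1 :|: twisted_path b2.
  by apply/forallP => -[a|c]; apply/forallP => -[a'|c'] //=; rewrite ?edge // setUC edge.
have [t [r [lt_r pair]]] := twist_pairs_complete a c.
have in_path b : b x = t -> [set block_embedding x (inl a); block_embedding x (inr c)]
                            \in twisted_path b.
  move=> bx; rewrite !ffunE; case: pair; rewrite -bx => -[e1 e2].
    by apply: (twisted_path_block_edge (x := x) lt_r); rewrite /= ?e1 ?e2.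
  by rewrite setUC; apply: (twisted_path_block_edge (x := x) lt_r); rewrite /= ?e1 ?e2.
rewrite inE; have [/in_path -> // | ne1] := eqVneq (b1 x) t.
have b2x : b2 x = t by move: neq_x ne1 {pair in_path}; case: (b1 x) (b2 x) t => [] [] [].
by rewrite (in_path b2 b2x) orbT.
Qed.

(* Distinct bit vectors give distinct paths: if b x = true, the vertices 4x
   and 4x+1 sit at positions 4x and 4x+3, so they are not adjacent in path b. *)
Lemma twisted_path_inj : injective twisted_path.
Proof.
suff split_bit b1 b2 x : b1 x = false -> b2 x = true -> twisted_path b1 != twisted_path b2.
  move=> b1 b2 e; apply/ffunP => x; case h1: (b1 x); case h2: (b2 x) => //.
    by have := split_bit b2 b1 x h2 h1; rewrite e eqxx.
  by have := split_bit b1 b2 x h1 h2; rewrite e eqxx.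
move=> b1x b2x; have := ltn_ord x => lt_x.
have lt0 : 4 * x < 4 * k.+1 by lia.
have lt1 : 4 * x + 1 < 4 * k.+1 by lia.
have lt3 : 4 * x + 3 < 4 * k.+1 by lia.
have s0 : twist_perm b2 (Ordinal lt0) = Ordinal lt0.
  by apply: val_inj; rewrite (@twist_perm_block b2 x 0) ?b2x ?addn0.
have s3 : twist_perm b2 (Ordinal lt3) = Ordinal lt1.
  by apply: val_inj; rewrite (@twist_perm_block b2 x 3) ?b2x.
apply/eqP => e.
have : [set Ordinal lt0; Ordinal lt1] \in twisted_path b1.
  by apply: (twisted_path_block_edge (x := x) (r := 0)); rewrite ?b1x /twist /=; lia.
by rewrite e -{1}s0 -s3 => /path_edges_positions /=; lia.
Qed.

Definition twisted_family : {set {set {set V}}} :=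
  [set twisted_path b | b : {ffun 'I_k -> bool}].

Lemma twisted_family_good : good_family K23e twisted_family.
Proof.
apply/andP; split.
  by apply/forall_inP => _ /imsetP [b _ ->]; apply: path_edges_ham.
apply/forall_inP => _ /imsetP [b1 _ ->]; apply/forall_inP => _ /imsetP [b2 _ ->].
apply/implyP => neq_paths.
have [x neq_x] : exists x, b1 x != b2 x.
  apply/existsP; apply: contraR neq_paths; rewrite negb_exists => /forallP same.
  by apply/eqP; congr twisted_path; apply/ffunP => x; apply/eqP; rewrite -[_ == _]negbK same.
exact: (union_contains_K23 neq_x).
Qed.

Lemma Hnum_K23_lower : 2 ^ k <= Hnum K23e (4 * k.+1).
Proof.
have <- : #|twisted_family| = 2 ^ k.
  by rewrite card_imset ?cardsT ?card_ffun ?card_bool ?card_ord //; exact: twisted_path_inj.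
by rewrite /Hnum; apply: leq_bigmax_cond; exact: twisted_family_good.
Qed.

End TwistedPaths.

From Stdlib Require Import Reals Lra.
Open Scope R_scope.

Lemma INR_expn2 n : INR (expn 2 n) = 2 ^ n.
Proof. by elim: n => [|n IH] //; rewrite expnS mult_INR IH. Qed.

Lemma golden_le_2 : (1 + sqrt 5) / 2 <= 2.
Proof.
have : sqrt 5 <= 3 by rewrite -(sqrt_square 3); [apply: sqrt_le_1_alt|]; lra.
lra.
Qed.

Lemma one_over_n_vanishes eps : 0 < eps ->
  exists N : nat, forall n : nat, (N <= n)%nat -> Rabs (1 / INR n) < eps.
Proof.
move=> eps_pos; have [N gtN] := INR_unbounded (/ eps).
exists N.+1 => n le_n; have : INR N.+1 <= INR n by apply/le_INR/leP.
have := Rinv_0_lt_compat _ eps_pos; rewrite S_INR => inv_pos le_n'.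
have n_pos : 0 < INR n by lra.
rewrite Rabs_right; last by apply: Rle_ge; apply: Rlt_le; apply: Rdiv_lt_0_compat; lra.
rewrite -(Rinv_inv eps) /Rdiv Rmult_1_l.
apply: Rinv_lt_contravar; [apply: Rmult_lt_0_compat|]; lra.
Qed.

Theorem mainTheorem4 :
  exists g : nat -> R,
    (forall eps : R, 0 < eps -> exists N : nat, forall n : nat,
        (N <= n)%nat -> Rabs (g n / INR n) < eps) /\
    (forall N : nat, exists n : nat, (N <= n)%nat /\ (0 < n)%nat /\
        Rpower ((1 + sqrt 5) / 2) (INR n - g n)
          <= INR (Hnum K23e (4 * n))).
Proof.
exists (fun _ => 1); split; first exact: one_over_n_vanishes.
move=> N; exists N.+1; do 2 split => //.
have phi_pos : 0 < (1 + sqrt 5) / 2 by have := sqrt_pos 5; lra.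
rewrite S_INR (_ : INR N + 1 - 1 = INR N); last ring.
rewrite Rpower_pow //.
apply: Rle_trans (_ : 2 ^ N <= _); first by apply: pow_incr; split; [lra | exact: golden_le_2].
by rewrite -INR_expn2; apply/le_INR/leP; exact: Hnum_K23_lower.
Qed.
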